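(* Let $\alpha\in[0,1]$ be irrational with continued fraction denominators $(q_n)_{n\ge1}$. There exists a set $S_\alpha\subset[0,1]$ of full Lebesgue measure such that for every $\beta\in S_\alpha$, with continued fraction denominators $(q'_n)_{n\ge1}$, there exists a sequence $(n_j)_{j\ge1}$ such that either $\lim_{j\to\infty}M_{n_j}=\infty$ or $\lim_{j\to\infty}N_{n_j}=\infty$, where for each $k$, $\sigma(k)$ is the index with $q'_{\sigma(k)}<q_k<q'_{\sigma(k)+1}$, $\eta(k)$ is the index with $q_{\eta(k)}<q'_k<q_{\eta(k)+1}$, and $$M_k=\max_{r:\,q'_{\sigma(k)}<q_r<q'_{\sigma(k)+1}}\min\Big\{\frac{q_r}{q'_{\sigma(k)}},\frac{q'_{\sigma(k)+1}}{q_r}\Big\},\qquad N_k=\max_{r:\,q_{\eta(k)}<q'_r<q_{\eta(k)+1}}\min\Big\{\frac{q'_r}{q_{\eta(k)}},\frac{q_{\eta(k)+1}}{q'_r}\Big\}.$$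
   Context: Continued fraction denominators of an irrational $\gamma=[c_0;c_1,\dots]$: $q_0=1$, $q_1=c_1$, $q_n=c_nq_{n-1}+q_{n-2}$. *)

From HB Require Import structures.
From mathcomp Require Import all_boot all_order all_algebra.
From mathcomp Require Import all_classical all_reals all_analysis.
Set Implicit Arguments. Unset Strict Implicit. Unset Printing Implicit Defensive.
Import Order.TTheory GRing.Theory Num.Theory.
Import numFieldNormedType.Exports.
Local Open Scope classical_set_scope.
Local Open Scope ring_scope.

Section CF.
Variable R : realType.

Definition frac (x : R) : R := x - (Num.floor x)%:~R.

Fixpoint cf_rem (x : R) (n : nat) : R :=
  match n with
  | 0 => x
  | n.+1 => (frac (cf_rem x n))^-1
  end.

(* partial quotients c_n = floor x_n, so x = [c_0; c_1, c_2, ...] *)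
Definition cf_digit (x : R) (n : nat) : R := (Num.floor (cf_rem x n))%:~R.

(* (q_n, q_{n+1}) with q_0 = 1, q_1 = c_1, q_n = c_n q_{n-1} + q_{n-2} *)
Fixpoint cf_qpair (x : R) (n : nat) : R * R :=
  match n with
  | 0 => (1, cf_digit x 1)
  | n.+1 => let p := cf_qpair x n in (p.2, cf_digit x n.+2 * p.2 + p.1)
  end.

Definition cf_q (x : R) (n : nat) : R := (cf_qpair x n).1.

Definition between_idx (q q' : nat -> R) (k s : nat) : Prop :=
  (1 <= s)%N /\ q' s < q k < q' s.+1.

(* M-type quantity for the gap (q'_s, q'_{s+1}):
   max over r >= 1 with q'_s < q_r < q'_{s+1} of min(q_r/q'_s, q'_{s+1}/q_r).
   (The index set is finite, so sup is the max.) *)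
Definition gap_ratio (q q' : nat -> R) (s : nat) : R :=
  sup [set Num.min (q r / q' s) (q' s.+1 / q r) |
        r in [set r : nat | (1 <= r)%N /\ q' s < q r < q' s.+1]].

End CF.

(* The convergents p_n/q_n of x cut [0, 1] into cylinders of length 1/(q_n (q_n + q_(n-1))),
   and a partial quotient c_(n+1) shrinks the next cylinder by a factor about c_(n+1)^2.
   If the partial quotients of alpha are bounded by K, its denominators grow by factors at
   most K + 1.  Almost every beta has unbounded partial quotients, because each generation
   of cylinders with partial quotients at most L keeps a fraction at most L/(L+1) of the
   previous one; a huge partial quotient c'_(i+1) of beta opens a gap (q'_i, q'_(i+1)) into
   which some q_k falls far from both ends.
   If the partial quotients of alpha are unbounded, pick c_(m+1) >= 8 T^2 (i+1), T = i + 2,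
   and the window [T q_m, q_(m+1) / T] inside the gap (q_m, q_(m+1)).  The beta whose
   denominators jump over this window lie in balls of total measure at most
   8 T^2 q_m / q_(m+1) <= 1/(i+1), so almost every beta has a denominator in infinitely
   many of these windows. *)

From Pilot Require Import Defs.
From HB Require Import structures.
From mathcomp Require Import all_boot all_order all_algebra.
From mathcomp Require Import all_classical all_reals all_analysis measurable_realfun.
From mathcomp Require Import ring lra.
Set Implicit Arguments.
Unset Strict Implicit.
Unset Printing Implicit Defensive.
Import Order.TTheory GRing.Theory Num.Theory.
Import numFieldNormedType.Exports.
Local Open Scope classical_set_scope.
Local Open Scope ring_scope.

Section Irrational.
Context {R : realType}.
Implicit Types x : R.

Lemma irrational_neq0 x : irrational x -> x != 0.
Proof. by move=> ix; apply/eqP => x0; apply: ix; exists 0 => //; rewrite rmorph0. Qed.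

Lemma irrationalBz x (z : int) : irrational x -> irrational (x - z%:~R).
Proof.
move=> ix [q _ qx]; apply: ix; exists (q + z%:~R) => //.
by rewrite rmorphD /= ratr_int qx subrK.
Qed.

Lemma irrationalV x : irrational x -> irrational x^-1.
Proof. by move=> ix [q _ qx]; apply: ix; exists q^-1 => //; rewrite fmorphV /= qx invrK. Qed.

Lemma irrational_itv01 x : irrational x -> 0 <= x <= 1 -> 0 < x < 1.
Proof.
move=> ix /andP[x0 x1]; rewrite !lt_neqAle x0 x1 !andbT eq_sym irrational_neq0 //.
by apply/eqP => x_1; apply: ix; exists 1 => //; rewrite rmorph1.
Qed.

Lemma frac_irrational x : irrational x -> 0 < Defs.frac x < 1.
Proof.
move=> ix; have /andP[fl_le lt_fl1] := floor_itv x.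
have frac_neq0 := irrational_neq0 (irrationalBz (z := Num.floor x) ix).
rewrite lt_neqAle eq_sym frac_neq0 /Defs.frac subr_ge0 fl_le ltrBlDl.
by rewrite -[1](@mulr1z R) -intrD.
Qed.

End Irrational.

Section Digits.
Context {R : realType}.

Lemma cf_remE (x : R) n : cf_rem x n = cf_digit x n + (cf_rem x n.+1)^-1.
Proof. by rewrite /= invrK /Defs.frac /cf_digit addrC subrK. Qed.

Lemma cf_digit_le_rem (x : R) n : cf_digit x n <= cf_rem x n.
Proof. exact: floor_le. Qed.

Section IrrationalDigits.
Context {x : R} (x_irr : irrational x).

Lemma cf_rem_irrational n : irrational (cf_rem x n).
Proof. by elim: n => //= n IH; apply/irrationalV/irrationalBz. Qed.

Lemma cf_rem_gt1 n : 1 < cf_rem x n.+1.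
Proof. by have /andP[? ?] := frac_irrational (@cf_rem_irrational n); rewrite invf_gt1. Qed.

Lemma cf_digitP n : exists2 a : nat, (0 < a)%N & cf_digit x n.+1 = a%:R.
Proof.
have : 1 <= Num.floor (cf_rem x n.+1) by rewrite floor_ge_int ltW ?cf_rem_gt1.
rewrite /cf_digit; case: (Num.floor _) => // a; rewrite lez_nat => a_gt0.
by exists a.
Qed.

Lemma cf_digit_ge1 n : 1 <= cf_digit x n.+1.
Proof. by have [a a_gt0 ->] := cf_digitP n; rewrite ler1n. Qed.

End IrrationalDigits.

End Digits.

Section Convergents.
Context {R : realType}.

(* [Convergent p p' q q'] holds two consecutive convergents
   [p/q = p_n/q_n] and [p'/q' = p_(n-1)/q_(n-1)]. *)
Record convergent := Convergent { cv_p : R; cv_p' : R; cv_q : R; cv_q' : R }.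

Definition cv0 := Convergent 0 1 1 0.

Definition cv_next (a : R) (c : convergent) :=
  Convergent (a * cv_p c + cv_p' c) (cv_p c) (a * cv_q c + cv_q' c) (cv_q c).

Fixpoint cf_conv (x : R) (n : nat) : convergent :=
  if n is k.+1 then cv_next (cf_digit x n) (cf_conv x k) else cv0.

(* The number with convergent data [c] and next complete quotient [1 / t]. *)
Definition cv_eval (c : convergent) (t : R) :=
  (cv_p c + t * cv_p' c) / (cv_q c + t * cv_q' c).

Definition cv_radius (c : convergent) (t : R) :=
  t / (cv_q c * (cv_q c + t * cv_q' c)).

Definition cv_admissible (c : convergent) :=
  [/\ 1 <= cv_q c, 0 <= cv_q' c <= cv_q c & `|cv_p' c * cv_q c - cv_p c * cv_q' c| = 1].

Lemma cv0_admissible : cv_admissible cv0.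
Proof. by split; rewrite /= ?lexx ?ler01 // !mul1r mul0r subr0 normr1. Qed.

Lemma cv_next_admissible a c : 1 <= a -> cv_admissible c -> cv_admissible (cv_next a c).
Proof.
move=> a_ge1 [q_ge1 /andP[q'_ge0 q'_le] det]; split => /=; [nra | nra |].
by rewrite -det -normrN; congr `|_|; ring.
Qed.

Lemma cv_eval_dist c t r : cv_admissible c -> 0 <= t <= r ->
  `|cv_eval c t - cv_p c / cv_q c| <= cv_radius c r.
Proof.
move=> [q_ge1 /andP[q'_ge0 q'_le] det] /andP[t_ge0 t_le].
have q_neq0 : cv_q c != 0 by apply/eqP; lra.
have den_neq0 : cv_q c + t * cv_q' c != 0 by apply/eqP; nra.
have -> : cv_eval c t - cv_p c / cv_q c =
    t * (cv_p' c * cv_q c - cv_p c * cv_q' c) / (cv_q c * (cv_q c + t * cv_q' c)).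
  by rewrite /cv_eval; field; rewrite q_neq0 den_neq0.
rewrite !normrM det mulr1 (ger0_norm t_ge0) ger0_norm; last first.
  by rewrite invr_ge0 mulr_ge0 //; nra.
rewrite /cv_radius ler_pdivrMr; last by apply: mulr_gt0; nra.
rewrite mulrAC ler_pdivlMr; last by apply: mulr_gt0; nra.
nra.
Qed.

Section Expansion.
Context {x : R} (x_irr : irrational x).

Lemma cf_conv_admissible n : cv_admissible (cf_conv x n).
Proof.
elim: n => [|n IH]; first exact: cv0_admissible.
exact: cv_next_admissible (cf_digit_ge1 x_irr n) IH.
Qed.

Lemma cf_convE n : 0 < x < 1 -> x = cv_eval (cf_conv x n) (cf_rem x n.+1)^-1.
Proof.
move=> /andP[x_gt0 x_lt1]; elim: n => [|n IH].
  rewrite /cv_eval /= invrK /Defs.frac.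
  have -> : Num.floor x = 0 by apply/eqP; rewrite floor_eq /= ltW //= add0r.
  by rewrite subr0 mulr1 mulr0 addr0 add0r divr1.
rewrite {1}IH (cf_remE x n.+1) /cv_eval /=.
set a := cf_digit x n.+1; set t := (cf_rem x n.+2)^-1.
have a_ge1 : 1 <= a by exact: cf_digit_ge1.
have t_gt0 : 0 < t by rewrite invr_gt0 (lt_trans _ (cf_rem_gt1 x_irr n.+1)).
have [] := cf_conv_admissible n.
set p := cv_p _; set p' := cv_p' _; set q := cv_q _; set q' := cv_q' _.
move=> q_ge1 /andP[q'_ge0 q'_le] _.
have at_neq0 : a + t != 0 by apply/eqP; lra.
have den'_neq0 : a * q + q' + t * q != 0 by apply/eqP; nra.
by field; rewrite -/a at_neq0 den'_neq0.
Qed.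

Lemma cf_conv_nextP k : exists2 a : nat, (0 < a)%N &
  cf_digit x k.+1 = a%:R /\ cf_conv x k.+1 = cv_next a%:R (cf_conv x k).
Proof. by have [a a_gt0 ca] := cf_digitP x_irr k; exists a; rewrite //= ca. Qed.

Lemma cf_conv_q n : cv_q (cf_conv x n) = cf_q x n.
Proof.
rewrite /cf_q; suff -> : cf_qpair x n = (cv_q (cf_conv x n), cv_q (cf_conv x n.+1)) by [].
by elim: n => [|n /= ->] /=; rewrite ?mulr1 ?addr0.
Qed.

Lemma cf_q_ge1 n : 1 <= cf_q x n.
Proof. by rewrite -cf_conv_q; case: (cf_conv_admissible n). Qed.

Lemma cf_q_ge_digit n : cf_digit x n.+1 * cf_q x n <= cf_q x n.+1.
Proof. by rewrite -!cf_conv_q /=; case: (cf_conv_admissible n) => _ /andP[? _] _; lra. Qed.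

Lemma cf_q_le_digit n : cf_q x n.+1 <= (cf_digit x n.+1 + 1) * cf_q x n.
Proof.
rewrite -!cf_conv_q /=; have := cf_digit_ge1 x_irr n.
by case: (cf_conv_admissible n) => _ /andP[_ ?] _; nra.
Qed.

Lemma cf_q_leS n : cf_q x n <= cf_q x n.+1.
Proof.
apply: le_trans (cf_q_ge_digit n); have := cf_digit_ge1 x_irr n.
have := cf_q_ge1 n; nra.
Qed.

Lemma cf_q_le {m n} : (m <= n)%N -> cf_q x m <= cf_q x n.
Proof.
move=> le_mn; apply: (homo_leq (r := fun a b => a <= b) _ _ _ le_mn) => //.
- by move=> ? ? ?; exact: le_trans.
- exact: cf_q_leS.
Qed.

Lemma cf_qSS n : cf_q x n.+2 = cf_digit x n.+2 * cf_q x n.+1 + cf_q x n.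
Proof. by rewrite -!cf_conv_q. Qed.

Lemma cf_q_ge_nat n : n%:R <= cf_q x n.
Proof.
elim: n => [|[|n] IH]; [exact: le_trans ler01 (cf_q_ge1 0) | exact: cf_q_ge1 |].
rewrite cf_qSS -natr1; have := cf_digit_ge1 x_irr n.+1.
have := cf_q_ge1 n; have := cf_q_ge1 n.+1; nra.
Qed.

End Expansion.

End Convergents.

Lemma exists_nat_gt {R : archiRealDomainType} (v : R) : exists n : nat, v < n%:R.
Proof. by exists (Num.bound `|v|); rewrite (le_lt_trans (ler_norm v)) ?archi_boundP. Qed.

Section Crossing.
Context {R : realDomainType}.

Lemma crossing_index (u : nat -> R) (v : R) :
  u 0%N < v -> (exists n, v <= u n) -> exists k, u k < v <= u k.+1.
Proof.
move=> u0_lt ex_ge; case: (ex_minnP ex_ge) => -[|k] v_le min_le.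
  by move: u0_lt; rewrite ltNge v_le.
exists k; rewrite v_le andbT ltNge; apply/negP => /min_le.
by rewrite ltnn.
Qed.

End Crossing.

Section NullSets.
Context {d} {T : measurableType d} {R : realType} (mu : {measure set T -> \bar R}).

Lemma le_measureU2 (A B : set T) (a b : R) : measurable A -> measurable B ->
  (mu A <= a%:E)%E -> (mu B <= b%:E)%E -> (mu (A `|` B) <= (a + b)%:E)%E.
Proof. by move=> mA mB A_le B_le; rewrite EFinD (le_trans (measureU2 mu mA mB)) ?leeD. Qed.

Lemma le_measure_bigsetU (s : seq nat) (F : nat -> set T) (b : nat -> R) :
  (forall i, measurable (F i)) -> (forall i, i \in s -> (mu (F i) <= (b i)%:E)%E) ->
  (mu (\big[setU/set0]_(i <- s) F i) <= (\sum_(i <- s) b i)%:E)%E.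
Proof.
move=> mF; elim: s => [|i s IH] F_le; first by rewrite !big_nil measure0.
rewrite !big_cons; apply: le_measureU2; first exact: mF.
- exact: bigsetU_measurable.
- by apply: F_le; rewrite mem_head.
by apply: IH => j j_s; apply: F_le; rewrite in_cons j_s orbT.
Qed.

Lemma measure0_le_cvg0 (A : set T) (u : R^nat) :
  u @ \oo --> 0 -> (forall n, (mu A <= (u n)%:E)%E) -> mu A = 0%E.
Proof.
move=> u0 A_le; apply/eqP; rewrite eq_le measure_ge0 andbT.
apply/lee_addgt0Pr => e e_gt0; rewrite add0e.
have [N _ uN] := cvgr0_norm_lt _ u0 _ e_gt0.
apply: le_trans (A_le N) _; rewrite lee_fin.
by apply/ltW/le_lt_trans/(uN N (leqnn N)); exact: ler_norm.
Qed.

Lemma negligible_liminf (B : nat -> set T) (u : R^nat) :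
  (forall i, measurable (B i)) -> u @ \oo --> 0 -> (forall i, (mu (B i) <= (u i)%:E)%E) ->
  mu.-negligible (\bigcup_j \bigcap_i B (i + j)%N).
Proof.
move=> mB u0 B_le; apply: negligible_bigcup => j.
exists (\bigcap_i B (i + j)%N); split => //; first exact: bigcapT_measurable.
apply: (@measure0_le_cvg0 _ (fun i => u (i + j)%N)); first by rewrite cvg_shiftn.
move=> i; apply: le_trans (B_le _); rewrite le_measure ?inE //.
  exact: bigcapT_measurable.
by move=> y; apply.
Qed.

End NullSets.

Section Covers.
Context {R : realType}.
Local Notation mu := (@lebesgue_measure R).
Implicit Types (c : @convergent R) (x X Y : R).

(* The length [|p/q - (p+p')/(q+q')|] of the cylinder of [c]. *)
Definition cv_len c := (cv_q c * (cv_q c + cv_q' c))^-1.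

Definition cv_ball c t := closed_ball (cv_p c / cv_q c) (cv_radius c t).

Lemma cv_radius1 c : cv_radius c 1 = cv_len c.
Proof. by rewrite /cv_radius !mul1r. Qed.

Lemma cv_len_gt0 c : cv_admissible c -> 0 < cv_len c.
Proof. by move=> [? /andP[? ?] _]; rewrite invr_gt0; apply: mulr_gt0; lra. Qed.

Lemma cv_radius_ge0 c t : cv_admissible c -> 0 <= t -> 0 <= cv_radius c t.
Proof. by move=> [? /andP[? ?] _] t_ge0; apply: divr_ge0 => //; apply: mulr_ge0; nra. Qed.

Lemma cv_radius_le c t : cv_admissible c -> 0 <= t -> cv_radius c t <= t / cv_q c ^+ 2.
Proof.
move=> [q_ge1 /andP[q'_ge0 _] _] t_ge0; have q_gt0 : 0 < cv_q c by lra.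
have den_gt0 : 0 < cv_q c + t * cv_q' c by nra.
rewrite /cv_radius expr2 ler_wpM2l // lef_pV2 ?posrE ?pmulr_rgt0 // ler_pM2l //.
by rewrite lerDl mulr_ge0.
Qed.

Lemma cv_ball_measure c t : cv_admissible c -> 0 <= t ->
  mu (cv_ball c t) = (2 * cv_radius c t)%:E.
Proof.
by move=> c_adm t_ge0; rewrite lebesgue_measure_closed_ball ?cv_radius_ge0 // mulr_natl.
Qed.

Lemma cv_ball_eval c t r : cv_admissible c -> 0 < t <= r -> cv_ball c r (cv_eval c t).
Proof.
move=> c_adm /andP[t_gt0 t_le]; have [q_ge1 /andP[q'_ge0 _] _] := c_adm.
rewrite /cv_ball closed_ballE /closed_ball_ /=; last first.
  have r_gt0 := lt_le_trans t_gt0 t_le.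
  by apply: divr_gt0 => //; apply: mulr_gt0; nra.
by rewrite distrC cv_eval_dist // ltW.
Qed.

Lemma cf_conv_ball x n t : irrational x -> 0 < x < 1 -> (cf_rem x n.+1)^-1 <= t ->
  cv_ball (cf_conv x n) t x.
Proof.
move=> x_irr x01 t_ge; rewrite {2}(cf_convE x_irr n x01).
apply: cv_ball_eval; first exact: cf_conv_admissible.
by rewrite t_ge invr_gt0 (lt_trans _ (cf_rem_gt1 x_irr n)).
Qed.

Lemma cv_len_next c a : cv_admissible c -> 1 <= a ->
  cv_len (cv_next a c) = (cv_q c * (a * cv_q c + cv_q' c))^-1 -
                         (cv_q c * ((a + 1) * cv_q c + cv_q' c))^-1.
Proof.
move=> [q_ge1 /andP[q'_ge0 _] _] a_ge1; rewrite /cv_len /=.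
have q_neq0 : cv_q c != 0 by apply/eqP; lra.
have den_neq0 : a * cv_q c + cv_q' c != 0 by apply/eqP; nra.
have den'_neq0 : (a + 1) * cv_q c + cv_q' c != 0 by apply/eqP; nra.
have den''_neq0 : a * cv_q c + cv_q' c + cv_q c != 0 by apply/eqP; nra.
by field; rewrite q_neq0 den_neq0 den'_neq0.
Qed.

Lemma sum_cv_len_next c m : cv_admissible c ->
  \sum_(1 <= a < m.+1) cv_len (cv_next a%:R c) =
  cv_len c - (cv_q c * (m.+1%:R * cv_q c + cv_q' c))^-1.
Proof.
move=> c_adm; pose f (a : nat) := - (cv_q c * (a%:R * cv_q c + cv_q' c))^-1.
rewrite (eq_big_nat _ _ (F2 := fun a => f a.+1 - f a)); last first.
  by move=> a /andP[a_ge1 _]; rewrite cv_len_next ?ler1n // /f opprK addrC -natr1.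
by rewrite telescope_sumr // /f opprK addrC mul1r.
Qed.

Lemma sum_cv_len_next_lt c X m : cv_admissible c -> cv_q c < X ->
  \sum_(1 <= a < m.+1) (if cv_q (cv_next a%:R c) < X then cv_len (cv_next a%:R c) else 0)
  <= cv_len c - (2 * X * cv_q c)^-1.
Proof.
move=> c_adm q_lt; have [q_ge1 /andP[q'_ge0 q'_le] _] := c_adm.
have inv_le (u v : R) : 0 < u <= v -> (cv_q c * v)^-1 <= (cv_q c * u)^-1.
  move=> /andP[u_gt0 u_le]; have q_gt0 : 0 < cv_q c by lra.
  by rewrite lef_pV2 ?posrE ?pmulr_rgt0 ?ler_pM2l // (lt_le_trans u_gt0).
(* The sum telescopes up to the first child with [q >= X], whose [q] is still [< 2 X]. *)
suff sum_le k : \sum_(1 <= a < k.+1)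
    (if cv_q (cv_next a%:R c) < X then cv_len (cv_next a%:R c) else 0)
    <= cv_len c - (cv_q c * Num.min (k.+1%:R * cv_q c + cv_q' c) (2 * X))^-1.
  apply: le_trans (sum_le m) _; rewrite lerD2l lerN2 mulrC inv_le // ge_min lexx orbT.
  have m_ge0 : 0 <= m%:R :> R by [].
  by rewrite lt_min -natr1 andbT; apply/andP; split; nra.
elim: k => [|k IH].
  rewrite big_geq // mul1r; have -> : Num.min (cv_q c + cv_q' c) (2 * X) = cv_q c + cv_q' c.
    by apply/min_idPl; lra.
  by rewrite subrr.
rewrite big_nat_recr //= -[k.+2%:R]natr1 -[k.+1%:R]natr1.
rewrite /= -[k.+1%:R]natr1 in IH.
have k_ge0 : 0 <= k%:R :> R by [].
case: ifPn => [lt_X | _]; last first.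
  rewrite addr0; apply: le_trans IH _; rewrite lerD2l lerN2 inv_le // lt_min.
  by rewrite le_min !ge_min; apply/and3P; split; [nra | nra | lra].
move: IH; have -> : Num.min ((k%:R + 1) * cv_q c + cv_q' c) (2 * X) =
    (k%:R + 1) * cv_q c + cv_q' c by apply/min_idPl; nra.
have -> : Num.min ((k%:R + 1 + 1) * cv_q c + cv_q' c) (2 * X) =
    (k%:R + 1 + 1) * cv_q c + cv_q' c by apply/min_idPl; nra.
by rewrite cv_len_next //; lra.
Qed.

Fixpoint digits_le_cover (L n : nat) c : set R :=
  if n is k.+1 then \big[setU/set0]_(1 <= a < L.+1) digits_le_cover L k (cv_next a%:R c)
  else cv_ball c 1.

Lemma digits_le_cover_measurable L n c : measurable (digits_le_cover L n c).
Proof.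
elim: n c => [|n IH] c /=; first exact: measurable_closed_ball.
exact: bigsetU_measurable.
Qed.

Lemma digits_le_cover_measure L n c : cv_admissible c ->
  (mu (digits_le_cover L n c) <= (2 * (L%:R / L.+1%:R) ^+ n * cv_len c)%:E)%E.
Proof.
elim: n c => [|n IH] c c_adm /=.
  by rewrite cv_ball_measure // cv_radius1 expr0 mulr1.
apply: le_trans.
  apply: le_measure_bigsetU => [a | a]; first exact: digits_le_cover_measurable.
  rewrite mem_index_iota => /andP[a_ge1 _].
  by apply/IH/cv_next_admissible; rewrite ?ler1n.
rewrite lee_fin -mulr_sumr sum_cv_len_next // exprS.
set r := L%:R / L.+1%:R.
have -> : 2 * (r * r ^+ n) * cv_len c = 2 * r ^+ n * (r * cv_len c) by ring.
have r_ge0 : 0 <= r by rewrite divr_ge0.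
apply: ler_wpM2l; first by apply: mulr_ge0 => //; exact: exprn_ge0.
have [q_ge1 /andP[q'_ge0 _] _] := c_adm.
have L1_gt0 : 0 < L.+1%:R :> R by [].
have -> : r = 1 - L.+1%:R^-1 by rewrite /r -natr1; field; rewrite natr1 pnatr_eq0.
rewrite mulrBl mul1r lerD2l lerN2 /cv_len -invfM lef_pV2 ?posrE; last 2 first.
- by apply: mulr_gt0 => //; apply: mulr_gt0; lra.
- by apply: mulr_gt0; [lra | rewrite -natr1; nra].
have : 0 <= L%:R * cv_q c * cv_q' c by apply: mulr_ge0 => //; apply: mulr_ge0 => //; lra.
by rewrite -natr1; nra.
Qed.

Lemma digits_le_cover_mem x L n k : irrational x -> 0 < x < 1 ->
  (forall i, (k < i <= k + n)%N -> cf_digit x i <= L%:R) ->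
  digits_le_cover L n (cf_conv x k) x.
Proof.
move=> x_irr x01; elim: n k => [|n IH] k digits_le /=.
  have rem_gt1 := cf_rem_gt1 x_irr k.
  by apply: cf_conv_ball => //; rewrite invf_le1 ?ltW // (lt_trans ltr01).
have [a a_gt0 [ca conv_next]] := cf_conv_nextP x_irr k.
rewrite -bigcup_seq; exists a.
  by rewrite /= mem_index_iota a_gt0 ltnS -(ler_nat R) -ca digits_le // ltnSn addnS ltnS leq_addr.
rewrite -conv_next; apply: IH => i /andP[lt_i le_i]; apply: digits_le.
by rewrite (ltn_trans _ lt_i) //= -addSnnS.
Qed.

Lemma digits_le_cover_null L : mu (\bigcap_n digits_le_cover L n cv0) = 0%E.
Proof.
pose r : R := L%:R / L.+1%:R.
have r_lt1 : `|r| < 1.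
  by rewrite ger0_norm ?divr_ge0 // ltr_pdivrMr // mul1r ltr_nat.
apply: (measure0_le_cvg0 (u := fun n => 2 * r ^+ n)).
  by rewrite -(mulr0 2); apply: cvgM; [exact: cvg_cst | exact: cvg_expr].
move=> n; apply: (@le_trans _ _ (mu (digits_le_cover L n cv0))).
  rewrite le_measure ?inE //; last by move=> y; apply.
    by apply: bigcapT_measurable => k; exact: digits_le_cover_measurable.
  exact: digits_le_cover_measurable.
apply: le_trans (digits_le_cover_measure L n cv0_admissible) _.
by rewrite /cv_len /= addr0 mulr1 invr1 mulr1.
Qed.

(* Covers the [x] whose denominators jump over [[X, Y]], i.e. [q_j < X] and [Y < q_(j+1)],
   at some step [j < n] reached with partial quotients at most [N]. *)
Fixpoint gap_cover X Y (N n : nat) c : set R :=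
  if n is k.+1 then
    if cv_q c < X then
      cv_ball c (2 * cv_q c / Y) `|`
      \big[setU/set0]_(1 <= a < N.+1) gap_cover X Y N k (cv_next a%:R c)
    else set0
  else set0.

Lemma gap_cover_measurable X Y N n c : measurable (gap_cover X Y N n c).
Proof.
elim: n c => [|n IH] c //=; case: ifPn => // _.
by apply: measurableU; [exact: measurable_closed_ball | exact: bigsetU_measurable].
Qed.

Lemma gap_cover_measure X Y N n c : 0 < X -> 0 < Y -> cv_admissible c ->
  (mu (gap_cover X Y N n c) <= (if cv_q c < X then 8 * X / Y * cv_len c else 0)%:E)%E.
Proof.
move=> X_gt0 Y_gt0; have C_ge0 : 0 <= 8 * X / Y by rewrite divr_ge0 ?mulr_ge0 ?ltW.
elim: n c => [|n IH] c c_adm /=.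
  rewrite measure0; case: ifP => // _.
  by rewrite lee_fin mulr_ge0 // ltW // cv_len_gt0.
case: ifPn => q_lt_X; last by rewrite measure0.
have [q_ge1 /andP[q'_ge0 q'_le] _] := c_adm.
have t_ge0 : 0 <= 2 * cv_q c / Y by apply: divr_ge0; lra.
pose S := \sum_(1 <= a < N.+1)
  (if cv_q (cv_next a%:R c) < X then cv_len (cv_next a%:R c) else 0).
have S_le : S <= cv_len c - (2 * X * cv_q c)^-1 := sum_cv_len_next_lt N c_adm q_lt_X.
have ball_le : (mu (cv_ball c (2 * cv_q c / Y)) <= (4 / (Y * cv_q c))%:E)%E.
  rewrite cv_ball_measure // lee_fin (_ : 4 / _ = 2 * (2 * cv_q c / Y / cv_q c ^+ 2)).
    exact/ler_wpM2l/cv_radius_le.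
  by field; apply/andP; split; apply/eqP; lra.
have children_le : (mu (\big[setU/set0]_(1 <= a < N.+1) gap_cover X Y N n (cv_next a%:R c))
    <= (8 * X / Y * S)%:E)%E.
  rewrite /S mulr_sumr; apply: le_measure_bigsetU => [a|a]; first exact: gap_cover_measurable.
  rewrite mem_index_iota => /andP[a_ge1 _]; rewrite (fun_if ( *%R _)) mulr0.
  by apply/IH/cv_next_admissible; rewrite ?ler1n.
have children_measurable :
    measurable (\big[setU/set0]_(1 <= a < N.+1) gap_cover X Y N n (cv_next a%:R c)).
  by apply: bigsetU_measurable => a _; exact: gap_cover_measurable.
apply: (@le_trans _ _ ((4 / (Y * cv_q c) + 8 * X / Y * S)%:E)).
  by apply: le_measureU2 => //; exact: measurable_closed_ball.
(* The ball costs [4 / (Y q)], which is exactly what the children save on [8 X / Y * cv_len c]. *)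
rewrite lee_fin; apply: le_trans (lerD (lexx _) (ler_wpM2l C_ge0 S_le)) _.
rewrite mulrBr; have -> : 8 * X / Y * (2 * X * cv_q c)^-1 = 4 / (Y * cv_q c).
  by field; apply/and3P; split; apply/eqP; lra.
by rewrite addrC subrK.
Qed.

Lemma gap_cover_mem x X Y N j m k : irrational x -> 0 < x < 1 ->
  cf_q x j < X -> Y < cf_q x j.+1 -> 2 * X <= Y -> X <= N%:R ->
  (k <= j < k + m)%N -> gap_cover X Y N m (cf_conv x k) x.
Proof.
move=> x_irr x01 qj_lt qj1_gt XY XN; elim: m k => [|m IH] k /=.
  by rewrite addn0 => /andP[/leq_ltn_trans/[apply]]; rewrite ltnn.
move=> /andP[le_kj lt_j]; rewrite cf_conv_q (le_lt_trans (cf_q_le x_irr le_kj)) //.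
have [a a_gt0 [ca conv_next]] := cf_conv_nextP x_irr k.
have qk_ge1 := cf_q_ge1 x_irr k.
have [lt_kj | ge_kj] := ltnP k j.
  right; rewrite -bigcup_seq; exists a.
    rewrite /= mem_index_iota a_gt0 ltnS -(ler_nat R) -ca /=.
    have := cf_q_ge_digit x_irr k; have := cf_q_le x_irr lt_kj.
    have := cf_digit_ge1 x_irr k; nra.
  by rewrite -conv_next; apply: IH; rewrite lt_kj addSnnS.
have <- : j = k by apply/eqP; rewrite eqn_leq le_kj ge_kj.
left; apply: cf_conv_ball => //.
have rem_gt0 : 0 < cf_rem x j.+1 by rewrite (lt_trans ltr01) ?cf_rem_gt1.
have q_gt0 : 0 < cf_q x j by rewrite (lt_le_trans ltr01) ?cf_q_ge1.
have Y_gt0 : 0 < Y by have := cf_q_ge1 x_irr j; lra.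
rewrite invf_ple ?posrE ?divr_gt0 ?mulr_gt0 // invf_div ler_pdivrMr ?mulr_gt0 //.
have := cf_q_le_digit x_irr j; have := cf_digit_ge1 x_irr j.
have := cf_digit_le_rem x j.+1; nra.
Qed.

Lemma gap_cover_avoid x X Y N : irrational x -> 0 < x < 1 ->
  1 < X -> 2 * X <= Y -> X <= N%:R ->
  ~ gap_cover X Y N N.+1 cv0 x -> exists r, X <= cf_q x r <= Y.
Proof.
move=> x_irr x01 X_gt1 XY XN x_out.
have q_unbounded : exists n, X <= cf_q x n.
  have [n n_gt] := exists_nat_gt X.
  by exists n; apply: le_trans (ltW n_gt) (cf_q_ge_nat x_irr n).
have [j /andP[qj_lt X_le]] := crossing_index (u := cf_q x) X_gt1 q_unbounded.
have [Y_ge|Y_lt] := leP (cf_q x j.+1) Y; first by exists j.+1; rewrite X_le.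
case: x_out; apply: (gap_cover_mem (m := N.+1) (k := 0) x_irr x01 qj_lt Y_lt) => //.
by rewrite leq0n add0n ltnS -(ler_nat R); have := cf_q_ge_nat x_irr j; lra.
Qed.

End Covers.

Section LargeGaps.
Context {R : realType}.

Definition large_gap (q q' : nat -> R) (T : R) :=
  exists k s, [/\ (0 < k)%N, between_idx q q' k s & T <= gap_ratio q q' s].

Lemma large_gap_witness (q q' : nat -> R) k s T :
  (forall r, 1 <= q r) -> (0 < k)%N -> between_idx q q' k s ->
  T <= q k / q' s -> T <= q' s.+1 / q k -> large_gap q q' T.
Proof.
move=> q_ge1 k_gt0 ks T_le T_le'; exists k, s; split => //.
have [s_gt0 /andP[_ qk_lt]] := ks.
have gaps_bounded : has_ubound [set Num.min (q r / q' s) (q' s.+1 / q r) |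
    r in [set r | (1 <= r)%N /\ q' s < q r < q' s.+1]].
  exists (q' s.+1) => _ [r _ <-]; rewrite ge_min; apply/orP; right.
  have := q_ge1 r; have := q_ge1 k.
  by move=> ? ?; rewrite ler_pdivrMr ?ler_peMr //; lra.
apply: le_trans (ub_le_sup gaps_bounded (x := Num.min (q k / q' s) (q' s.+1 / q k)) _).
  by rewrite le_min T_le.
by exists k; rewrite //= ks.2.
Qed.

Lemma large_gap_le (q q' : nat -> R) T T' : T <= T' -> large_gap q q' T' -> large_gap q q' T.
Proof.
by move=> le_T [k [s [k_gt0 ks T'_le]]]; exists k, s; split => //; exact: le_trans T'_le.
Qed.

Lemma large_gaps_diverge (q q' : nat -> R) : (forall T, large_gap q q' T) ->
  exists n sigma, [/\ forall j, (0 < n j)%N, forall j, between_idx q q' (n j) (sigma j) &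
                      (fun j => gap_ratio q q' (sigma j)) @ \oo --> +oo].
Proof.
move=> gaps; have /choice[ks ksP] : forall j : nat, exists ks : nat * nat,
    [/\ (0 < ks.1)%N, between_idx q q' ks.1 ks.2 & j%:R <= gap_ratio q q' ks.2].
  by move=> j; have [k [s ?]] := gaps j%:R; exists (k, s).
exists (fun j => (ks j).1), (fun j => (ks j).2); split; [by move=> j; case: (ksP j)..|].
apply/cvgryPge => A; near=> j; apply: le_trans (_ : j%:R <= _); last by case: (ksP j).
by near: j; exact: nbhs_infty_ger.
Unshelve. all: by end_near.
Qed.

End LargeGaps.

Section AlmostEverywhere.
Context {R : realType}.
Local Notation mu := (@lebesgue_measure R).
Implicit Types (x alpha beta : R).

Definition cf_digits_unbounded x := forall v : R, exists n, (0 < n)%N /\ v <= cf_digit x n.+1.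

Lemma cf_digits_unbounded_lt x :
  (forall K : R, exists n, K < cf_digit x n.+1) -> cf_digits_unbounded x.
Proof.
move=> digit_gt v; have [[|n] c_gt] := digit_gt (Num.max v (cf_digit x 1)).
  by move: c_gt; rewrite gt_max ltxx andbF.
by exists n.+1; split => //; move: c_gt; rewrite gt_max => /andP[/ltW].
Qed.

Lemma ae_cf_digits_unbounded : exists Z : set R, mu.-negligible Z /\
  forall x, irrational x -> 0 < x < 1 -> ~ Z x -> cf_digits_unbounded x.
Proof.
exists (\bigcup_L \bigcap_n digits_le_cover L n cv0); split.
  apply: negligible_bigcup => L; exists (\bigcap_n digits_le_cover L n cv0).
  split; [|exact: digits_le_cover_null|by []].
  by apply: bigcapT_measurable => n; exact: digits_le_cover_measurable.
move=> x x_irr x01 x_out; apply: cf_digits_unbounded_lt => K.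
apply: contrapT => digits_le; have [L K_lt] := exists_nat_gt K.
apply: x_out; exists L => // n _; apply: (digits_le_cover_mem (k := 0)) => // -[//|i] _.
apply: ltW; rewrite ltNge; apply/negP => L_le; apply: digits_le; exists i.
exact: lt_le_trans K_lt L_le.
Qed.

Lemma large_gaps_bounded_unbounded alpha beta K :
  irrational alpha -> irrational beta ->
  (forall n, cf_digit alpha n.+1 <= K) -> cf_digits_unbounded beta ->
  forall T, large_gap (cf_q alpha) (cf_q beta) T.
Proof.
move=> a_irr b_irr digit_le b_unb T; wlog T_ge2 : T / 2 <= T.
  move=> gap; apply: (large_gap_le (T' := Num.max T 2)); first by rewrite le_max lexx.
  by apply: gap; rewrite le_max lexx orbT.
have K_ge1 : 1 <= K := le_trans (cf_digit_ge1 a_irr 0) (digit_le 0%N).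
have [i [i_gt0 c_ge]] := b_unb ((K + 1) * T ^+ 2).
pose A := cf_q beta i; pose B := cf_q beta i.+1.
have A_ge1 : 1 <= A := cf_q_ge1 b_irr i.
have B_ge : (K + 1) * T ^+ 2 * A <= B.
  apply: le_trans (cf_q_ge_digit b_irr i); apply: ler_wpM2r; lra.
have q_unbounded : exists n, A * T <= cf_q alpha n.
  have [n n_gt] := exists_nat_gt (A * T).
  by exists n; apply: le_trans (ltW n_gt) (cf_q_ge_nat a_irr n).
(* [q_(k+1)] is the first denominator of alpha reaching [A T]; as the partial quotients of
   alpha are at most [K], it stays below [(K + 1) A T <= B / T]. *)
have [|k /andP[qk_lt qk1_ge]] := crossing_index (u := cf_q alpha) _ q_unbounded.
  by rewrite (_ : cf_q alpha 0 = 1) //; nra.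
have qk1_lt : cf_q alpha k.+1 < (K + 1) * (A * T).
  apply: le_lt_trans (cf_q_le_digit a_irr k) _.
  have := digit_le k; have := cf_q_ge1 a_irr k; nra.
have AT_gt : A < A * T by nra.
have B_ge' : T * ((K + 1) * (A * T)) <= B.
  by rewrite (_ : T * _ = (K + 1) * T ^+ 2 * A) //; ring.
have q_gt0 : 0 < cf_q alpha k.+1 by lra.
apply: (large_gap_witness (k := k.+1) (s := i) (cf_q_ge1 a_irr)) => //.
- split => //; apply/andP; split; nra.
- by rewrite ler_pdivlMr; nra.
by rewrite ler_pdivlMr //; nra.
Qed.

Lemma large_gap_window alpha beta m r (t : R) : irrational alpha -> irrational beta ->
  (0 < m)%N -> 2 <= t -> t * cf_q alpha m <= cf_q beta r <= cf_q alpha m.+1 / t ->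
  large_gap (cf_q beta) (cf_q alpha) t.
Proof.
move=> a_irr b_irr m_gt0 t_ge2 /andP[X_le le_Y].
have q_ge1 := cf_q_ge1 a_irr m; have q1_ge1 := cf_q_ge1 a_irr m.+1.
have qr_gt0 : 0 < cf_q beta r := lt_le_trans ltr01 (cf_q_ge1 b_irr r).
apply: (large_gap_witness (k := r) (s := m) (cf_q_ge1 b_irr)).
- by case: r X_le {le_Y qr_gt0} => // X_le; move: X_le; rewrite (_ : cf_q beta 0 = 1) //; nra.
- split => //; apply/andP; split; first by nra.
  by apply: le_lt_trans le_Y _; rewrite ltr_pdivrMr; nra.
- by rewrite ler_pdivlMr; nra.
- by rewrite ler_pdivlMr // mulrC -ler_pdivlMr //; lra.
Qed.

Lemma gap_window_bounds (t j Q Q1 : R) : 2 <= t -> 1 <= j -> 1 <= Q ->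
  8 * t ^+ 2 * j * Q <= Q1 ->
  [/\ 1 < t * Q, 2 * (t * Q) <= Q1 / t & 8 * (t * Q) / (Q1 / t) <= j^-1].
Proof.
move=> t_ge2 j_ge1 Q_ge1; rewrite expr2 => Q1_ge.
have ttQ_ge1 : 1 <= t * t * Q by nra.
have Q1_gt0 : 0 < Q1 by nra.
split; first by nra.
  by rewrite ler_pdivlMr; nra.
have -> : 8 * (t * Q) / (Q1 / t) = 8 * t * t * Q / Q1.
  by field; apply/andP; split; apply/eqP; lra.
by rewrite ler_pdivrMr // mulrC ler_pdivlMl; nra.
Qed.

Lemma ae_large_gaps_unbounded alpha : irrational alpha -> cf_digits_unbounded alpha ->
  exists Z : set R, mu.-negligible Z /\
  forall beta, irrational beta -> 0 < beta < 1 -> ~ Z beta ->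
  forall T, large_gap (cf_q beta) (cf_q alpha) T.
Proof.
move=> a_irr a_unb; pose t (i : nat) : R := i.+2%:R.
have /choice[m mP] : forall i, exists m,
    (0 < m)%N /\ 8 * t i ^+ 2 * i.+1%:R <= cf_digit alpha m.+1 by move=> i; exact: a_unb.
pose X i := t i * cf_q alpha (m i); pose Y i := cf_q alpha (m i).+1 / t i.
have XY i : [/\ 1 < X i, 2 * X i <= Y i & 8 * X i / Y i <= harmonic i].
  have [_ c_ge] := mP i; have q_ge1 := cf_q_ge1 a_irr (m i).
  apply: gap_window_bounds; rewrite ?ler_nat ?ler1n //.
  exact: le_trans (ler_wpM2r (le_trans ler01 q_ge1) c_ge) (cf_q_ge_digit a_irr (m i)).
have /choice[N NP] : forall i, exists N : nat, X i < N%:R by move=> i; exact: exists_nat_gt.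
pose B i := gap_cover (X i) (Y i) (N i) (N i).+1 cv0.
exists (\bigcup_j \bigcap_i B (i + j)%N); split.
  apply: (negligible_liminf (u := harmonic)) => [i | | i]; first exact: gap_cover_measurable.
    exact: cvg_harmonic.
  have [X_gt1 XY_le XY_harm] := XY i; have X_gt0 : 0 < X i by lra.
  have Y_gt0 : 0 < Y i by lra.
  apply: le_trans (gap_cover_measure (N i) (N i).+1 X_gt0 Y_gt0 cv0_admissible) _.
  by rewrite /= X_gt1 /cv_len /= addr0 mulr1 invr1 mulr1 lee_fin.
move=> beta b_irr b01 b_out T.
have [j T_lt] := exists_nat_gt T.
have [i b_out_i] : exists i, ~ B (i + j)%N beta.
  apply: contrapT => b_in; apply: b_out; exists j => // i _.
  by apply: contrapT => b_out_i; apply: b_in; exists i.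
have [X_gt1 XY_le _] := XY (i + j)%N.
have [r X_qr_Y] := gap_cover_avoid b_irr b01 X_gt1 XY_le (ltW (NP _)) b_out_i.
apply: (large_gap_le (T' := t (i + j)%N)).
  by apply: ltW (lt_le_trans T_lt _); rewrite ler_nat !leqW // leq_addl.
by apply: (large_gap_window a_irr b_irr (mP _).1 _ X_qr_Y); rewrite ler_nat.
Qed.

Lemma ae_large_gaps alpha : irrational alpha ->
  exists Z : set R, mu.-negligible Z /\
  forall beta, irrational beta -> 0 < beta < 1 -> ~ Z beta ->
    (forall T, large_gap (cf_q alpha) (cf_q beta) T) \/
    (forall T, large_gap (cf_q beta) (cf_q alpha) T).
Proof.
move=> a_irr; have [[K digit_le]|digits_unb] :=
  pselect (exists K : R, forall n, cf_digit alpha n.+1 <= K).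
- have [Z [Z_null Z_unb]] := ae_cf_digits_unbounded.
  exists Z; split => // beta b_irr b01 b_out; left.
  exact: large_gaps_bounded_unbounded digit_le (Z_unb _ b_irr b01 b_out).
- have a_unb : cf_digits_unbounded alpha.
    apply: cf_digits_unbounded_lt => K; apply: contrapT => digit_le; apply: digits_unb.
    by exists K => n; rewrite leNgt; apply/negP => K_lt; apply: digit_le; exists n.
  have [Z [Z_null Z_gaps]] := ae_large_gaps_unbounded a_irr a_unb.
  by exists Z; split => // beta b_irr b01 b_out; right; exact: Z_gaps.
Qed.

Lemma rational_negligible : mu.-negligible (@rational R).
Proof.
exists (@rational R); split => //; last by rewrite -lebesgue_measure_rat.
rewrite /rational (_ : ratr @` setT = \bigcup_(q : rat) [set (ratr q : R)]).
  by apply: bigcupT_measurable_rat => q; exact: measurable_set1.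
by apply/seteqP; split => [y [q _ <-]|y [q _ ->]]; exists q.
Qed.

Lemma full_measure_avoiding (Z : set R) : mu.-negligible Z ->
  exists S : set R, [/\ measurable S, S `<=` `[0, 1]%classic, mu S = 1%E & S `<=` ~` Z].
Proof.
move=> [A [mA A0 ZA]]; exists (`[0, 1]%classic `\` A); split.
- by apply: measurableD => //; exact: measurable_itv.
- by move=> y [].
- have mu01 : mu `[0, 1]%classic = 1%E.
    by rewrite lebesgue_measure_itv /= lte_fin ltr01 oppr0 adde0.
  have muA : mu (`[0, 1]%classic `&` A) = 0%E.
    apply/eqP; rewrite eq_le measure_ge0 andbT -A0 le_measure ?inE //.
    by apply: measurableI => //; exact: measurable_itv.
  have D_eq : mu (`[0, 1]%classic `\` A) =
      (mu `[0%R, 1%R]%classic - mu (`[0%R, 1%R]%classic `&` A))%E.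
    have mu01_fin : (mu `[0%R, 1%R]%classic < +oo)%E by rewrite mu01 ltry.
    by apply: measureD => //; exact: mu01_fin.
  by rewrite D_eq mu01 muA sube0.
- by move=> y [_ yA] /ZA.
Qed.

End AlmostEverywhere.

Theorem theorem8p1 (R : realType) (alpha : R) :
  0 <= alpha <= 1 -> alpha \in (@irrational R) ->
  exists S : set R,
    [/\ measurable S, S `<=` `[0, 1]%classic &
        (@lebesgue_measure R S = 1%:E)%E] /\
    forall beta, S beta ->
      let q := cf_q alpha in
      let q' := cf_q beta in
      exists n : nat -> nat, (forall j, (1 <= n j)%N) /\
        ((exists sigma : nat -> nat,
            (forall j, between_idx q q' (n j) (sigma j)) /\
            (fun j => gap_ratio q q' (sigma j)) @ \oo --> +oo)
         \/
         (exists eta : nat -> nat,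
            (forall j, between_idx q' q (n j) (eta j)) /\
            (fun j => gap_ratio q' q (eta j)) @ \oo --> +oo)).
Proof.
move=> a01; rewrite inE => a_irr.
have [Z [Z_null Z_gaps]] := ae_large_gaps a_irr.
have [S [mS S01 muS S_out]] := full_measure_avoiding (negligibleU rational_negligible Z_null).
exists S; split=> // beta S_beta q q'.
have b_irr : irrational beta by move=> b_rat; exact: S_out beta S_beta (or_introl b_rat).
have b_out : ~ Z beta by move=> b_Z; exact: S_out beta S_beta (or_intror b_Z).
have b01 : 0 < beta < 1.
  by apply: irrational_itv01 => //; have := S01 _ S_beta; rewrite /= in_itv.
case: (Z_gaps beta b_irr b01 b_out) => /large_gaps_diverge[n [s [n_gt0 ns s_cvg]]].
  by exists n; split => //; left; exists s.
by exists n; split => //; right; exists s.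
Qed.
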